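(* Let $\mathcal H$ be a hypothesis class, and let $S$ be a sample of size $n>1$ that is not realizable by $\mathcal H$ but every proper subsample of $S$ is realizable by $\mathcal H$. Then there exist two functions $F_a,F_b$ mapping $n$-bit strings $x,y\in\{0,1\}^n$ to subsamples of $S$ such that $x\cap y=\emptyset$ (identifying bit strings with subsets of $[n]$) if and only if the joint sample $(F_a(x),F_b(y))$ is not realizable by $\mathcal H$.
   Context: A sample is a finite sequence of examples $(x,y)\in\mathcal X\times\{\pm1\}$; a subsample of $S$ is a sample all of whose examples appear in $S$; $(S_1,S_2)$ denotes concatenation. A sample is realizable by $\mathcal H$ if some $h\in\mathcal H$ agrees with all its examples. *)

From Stdlib Require List.
From mathcomp Require Import all_boot.
Set Implicit Arguments. Unset Strict Implicit. Unset Printing Implicit Defensive.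

(* Labels {+1,-1} are encoded as bool (true = +1, false = -1).
   A hypothesis is a function X -> bool; a hypothesis class is a predicate on them. *)
Definition sample (X : Type) := seq (X * bool).

Definition subsample (X : Type) (T S : sample X) : Prop :=
  forall e, List.In e T -> List.In e S.

Definition proper_subsample (X : Type) (T S : sample X) : Prop :=
  subsample T S /\ (size T < size S)%N.

Definition realizable (X : Type) (H : (X -> bool) -> Prop) (S : sample X) : Prop :=
  exists h, H h /\ forall e, List.In e S -> h e.1 = e.2.

Definition bits_set (n : nat) (x : {ffun 'I_n -> bool}) : {set 'I_n} :=
  [set i | x i].

(* Let s_1, ..., s_n be the examples of S.  Send a bit string x to the
   subsample of those s_i with x_i = 0.  Then (F x, F y) misses s_i exactly
   when x_i = y_i = 1.  If x and y are disjoint, (F x, F y) contains all of S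
   and so cannot be realizable; otherwise it omits some s_i, so it lies inside
   S with its i-th example deleted, a proper and hence realizable subsample. *)
From mathcomp Require Import all_boot.

Set Implicit Arguments.
Unset Strict Implicit.
Unset Printing Implicit Defensive.

Lemma In_mem (T : eqType) (x : T) (s : seq T) : List.In x s <-> x \in s.
Proof.
elim: s => [|a s IH] /=; first by [].
rewrite in_cons; split.
- by case=> [->|/IH ->]; rewrite ?eqxx ?orbT.
- by case/orP=> [/eqP ->|/IH]; [left|right].
Qed.

Lemma In_nthP (A : Type) (d : A) (s : seq A) (e : A) :
  List.In e s <-> exists2 i, (i < size s)%N & nth d s i = e.
Proof.
elim: s e => [|a s IH] e /=; first by split=> // [[]].
split=> [[->|/IH [i lt_i_s <-]]|[[|i] lt_i_s <-]].
- by exists 0.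
- by exists i.+1.
- by left.
- by right; apply/IH; exists i.
Qed.

Lemma In_tnthP (A : Type) (s : seq A) (e : A) :
  List.In e s <-> exists i, e = tnth (in_tuple s) i.
Proof.
split=> [s_e | [i ->]].
- have [i lt_i_s <-] := proj1 (In_nthP e s e) s_e.
  by exists (Ordinal lt_i_s); rewrite (tnth_nth e).
- have d := tnth_default (in_tuple s) i.
  by apply/(In_nthP d); exists i; rewrite ?(tnth_nth d).
Qed.

Lemma realizable_subsample (X : Type) (H : (X -> bool) -> Prop) (s t : sample X) :
  subsample s t -> realizable H t -> realizable H s.
Proof. by move=> st [h [Hh t_h]]; exists h; split => // e /st /t_h. Qed.

Section Restrict.

Variables (X : Type) (s : sample X).
Implicit Types P Q : pred 'I_(size s).

Definition restrict P : sample X := [seq tnth (in_tuple s) i | i <- enum P].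

Lemma In_restrict P (e : X * bool) :
  List.In e (restrict P) <-> exists2 i, P i & e = tnth (in_tuple s) i.
Proof.
rewrite List.in_map_iff; split.
- by case=> i [<- /In_mem]; rewrite mem_enum; exists i.
- by case=> i P_i ->; exists i; split => //; apply/In_mem; rewrite mem_enum.
Qed.

Lemma size_restrict P : size (restrict P) = #|P|.
Proof. by rewrite size_map -cardE. Qed.

Lemma subsample_restrict P : subsample (restrict P) s.
Proof. by move=> e /In_restrict [i _ ->]; apply/In_tnthP; exists i. Qed.

Lemma restrict_total P : (forall i, P i) -> subsample s (restrict P).
Proof. by move=> P_all e /In_tnthP [i ->]; apply/In_restrict; exists i. Qed.

Lemma restrict_subset P Q : {subset P <= Q} -> subsample (restrict P) (restrict Q).
Proof. by move=> PQ e /In_restrict [i /PQ Q_i ->]; apply/In_restrict; exists i. Qed.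

Lemma In_restrict_cat P Q (e : X * bool) :
  List.In e (restrict P ++ restrict Q) <-> List.In e (restrict [predU P & Q]).
Proof.
rewrite List.in_app_iff !In_restrict; split.
- by case=> -[i i_in ->]; exists i => //; apply/orP; [left|right].
- by case=> i /orP [Pi|Qi] ->; [left|right]; exists i.
Qed.

Lemma proper_subsample_restrictC1 (i : 'I_(size s)) :
  proper_subsample (restrict (predC1 i)) s.
Proof.
split; first exact: subsample_restrict.
by rewrite size_restrict cardC1 card_ord; case: (size s) i => [[]|].
Qed.

End Restrict.

Arguments restrict {X} s P.

Theorem lemma5 (X : Type) (H : (X -> bool) -> Prop) (S : sample X) :
  (1 < size S)%N ->
  ~ realizable H S ->
  (forall T, proper_subsample T S -> realizable H T) ->
  exists Fa Fb : {ffun 'I_(size S) -> bool} -> sample X,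
    (forall x, subsample (Fa x) S) /\
    (forall y, subsample (Fb y) S) /\
    (forall x y,
       bits_set x :&: bits_set y = set0 <-> ~ realizable H (Fa x ++ Fb y)).
Proof.
move=> _ S_nonrealizable proper_realizable.
pose F (x : {ffun 'I_(size S) -> bool}) := restrict S [pred i | ~~ x i].
have F_sub x : subsample (F x) S by apply: subsample_restrict.
exists F, F; do 2 split => //.
move=> x y; split.
- move=> /setP xy_disjoint FxFy_realizable; apply: S_nonrealizable.
  apply: realizable_subsample FxFy_realizable => e /restrict_total S_e.
  apply/In_restrict_cat/S_e => i /=.
  by have := xy_disjoint i; rewrite !inE -negb_and => ->.
- move=> FxFy_nonrealizable; apply/setP => i; rewrite !inE.
  apply/negP => /andP [x_i y_i]; apply: FxFy_nonrealizable.
  apply: realizable_subsample (proper_realizable _ (proper_subsample_restrictC1 i)).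
  move=> e /In_restrict_cat; apply: restrict_subset => j /orP.
  by rewrite !inE; case=> j_out; apply: contraNneq j_out => ->.
Qed.
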